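(* (i) Every hyperbolic homogeneous polynomial $f\in\mathbb{R}[x,y]$ has at least one real linear factor, and every real linear factor of a hyperbolic homogeneous polynomial has multiplicity one. (ii) An elliptic homogeneous polynomial $f\in\mathbb{R}[x,y]$ has no real linear factors.
   Context: For a polynomial $f\in\mathbb{R}[x,y]$, its Hessian polynomial is $\mathrm{Hess}\,f=f_{xx}f_{yy}-f_{xy}^2$. A homogeneous polynomial $f\in\mathbb{R}[x,y]$ is called hyperbolic (resp. elliptic) if its Hessian polynomial $\mathrm{Hess}\,f$ has no real linear factors and $\mathrm{Hess}\,f(x,y)\le 0$ (resp. $\ge 0$) for all $(x,y)\in\mathbb{R}^2$. A real linear factor means a factor of the form $ax+by$ with $(a,b)\in\mathbb{R}^2\setminus\{0\}$. *)

From HB Require Import structures.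
From mathcomp Require Import all_boot all_order all_algebra.
From mathcomp Require Import mpoly.
From mathcomp Require Import reals.

Set Implicit Arguments.
Unset Strict Implicit.
Unset Printing Implicit Defensive.

Import Order.TTheory GRing.Theory Num.Theory.
Local Open Scope ring_scope.

(* Bivariate real polynomials: {mpoly R[2]}, variable x = 'X_0, y = 'X_1.   *)

Section Defs.
Variable R : realType.

Definition x0 : 'I_2 := ord0.
Definition x1 : 'I_2 := ord_max.

Definition homogeneous (f : {mpoly R[2]}) : Prop :=
  exists d : nat, f \is d.-homog.

Definition hess (f : {mpoly R[2]}) : {mpoly R[2]} :=
  (f^`M(x0))^`M(x0) * (f^`M(x1))^`M(x1) - ((f^`M(x0))^`M(x1)) ^+ 2.

Definition ev2 (p : {mpoly R[2]}) (x y : R) : R :=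
  p.@[[ffun i : 'I_2 => if i == x0 then x else y]].

Definition linform (a b : R) : {mpoly R[2]} := a *: 'X_x0 + b *: 'X_x1.

Definition mdvd (g f : {mpoly R[2]}) : Prop := exists q : {mpoly R[2]}, f = q * g.

Definition is_real_linear_factor (a b : R) (p : {mpoly R[2]}) : Prop :=
  (a, b) != (0, 0) /\ mdvd (linform a b) p.

Definition has_real_linear_factor (p : {mpoly R[2]}) : Prop :=
  exists a b : R, is_real_linear_factor a b p.

Definition hyperbolic (f : {mpoly R[2]}) : Prop :=
  homogeneous f /\ ~ has_real_linear_factor (hess f) /\
  forall x y : R, ev2 (hess f) x y <= 0.

Definition elliptic (f : {mpoly R[2]}) : Prop :=
  homogeneous f /\ ~ has_real_linear_factor (hess f) /\
  forall x y : R, 0 <= ev2 (hess f) x y.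

End Defs.

(* A homogeneous polynomial vanishing at a nonzero point vanishes on the whole
   line through it, hence is divisible by the linear form cutting out that line.
   If f = q L with L = a x + b y, then on the line L = 0 one has
   Hess f = -(a q_y - b q_x)^2, and Hess f = 0 there if L^2 divides f; a sign
   condition on Hess f thus makes it vanish on that line, giving it a real linear
   factor.  This proves (ii) and the simplicity of the linear factors in (i).
   If a hyperbolic f of degree n > 0 had no real linear factor, it would not
   vanish off the origin, so we may assume f > 0 there.  Euler's identity gives
   f_x(+-1, 0) = +-n f(+-1, 0), so t |-> f_x(t, 1) changes sign from - to +, and
   at a zero y where it crosses upwards the Euler identities give
   Hess f(y, 1) = n (n - 1) f(y, 1) f_xx(y, 1) >= 0.  As Hess f <= 0, the
   homogeneous Hess f vanishes at (y, 1) and again has a linear factor. *)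

From HB Require Import structures.
From mathcomp Require Import all_boot all_order all_algebra.
From mathcomp Require Import mpoly.
From mathcomp Require Import reals.
From mathcomp Require Import polyrcf.
From mathcomp Require Import ring lra zify.
From Stdlib Require Import Classical.

Import Order.TTheory GRing.Theory Num.Theory.
Local Open Scope ring_scope.

Section HessianLinearFactors.
#[local] Set Implicit Arguments.
#[local] Unset Strict Implicit.

Lemma big_ord2 (T : Type) (idx : T) (op : Monoid.law idx) (F : 'I_2 -> T) :
  \big[op/idx]_(i < 2) F i = op (F x0) (F x1).
Proof. by rewrite big_ord_recl big_ord1; congr (op _ (F _)); exact: val_inj. Qed.

Lemma ord2P (i : 'I_2) : i = x0 \/ i = x1.
Proof. by case: i => [[|[|k]] Hk]; [left|right|]; try exact: val_inj. Qed.

Lemma mdeg_ord2 (m : 'X_{1..2}) : mdeg m = (m x0 + m x1)%N.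
Proof. by rewrite mdegE big_ord2. Qed.

Lemma mpolyX_ord2 (R : comNzRingType) (m : 'X_{1..2}) :
  'X_[m] = 'X_x0 ^+ m x0 * 'X_x1 ^+ m x1 :> {mpoly R[2]}.
Proof. by rewrite mpolyXE_id big_ord2. Qed.

Lemma mpoly_supp_ind (n : nat) (R : nzRingType) (P : {mpoly R[n]} -> Prop) p :
  P 0 -> (forall p q, P p -> P q -> P (p + q)) ->
  (forall c m, m \in msupp p -> P (c *: 'X_[m])) -> P p.
Proof.
move=> P0 PD PX; rewrite (mpolyE p) big_seq.
by elim/big_ind: _ => // m Hm; apply: PX.
Qed.

Lemma mderivXU (n : nat) (K : nzRingType) (i j : 'I_n) :
  ('X_j : {mpoly K[n]})^`M(i) = (j == i)%:R.
Proof.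
rewrite mderivX mnm1E; case: eqP => [->|_]; last by rewrite scale0r.
by rewrite -{1}[U_(i)%MM]add0m addmK mpolyX0 scale1r.
Qed.

Lemma dhomog_ord2P d (R : nzRingType) (p : {mpoly R[2]}) m :
  p \is d.-homog -> m \in msupp p -> (m x0 + m x1)%N = d.
Proof. by move=> /dhomogP hp /hp hm; rewrite -mdeg_ord2; exact: hm. Qed.

Lemma poly_vanishing_eq0 (K : numDomainType) (r : {poly K}) :
  (forall y, r.[y] = 0) -> r = 0.
Proof.
move=> r0; apply: (@roots_geq_poly_eq0 _ r [seq i%:R | i <- iota 0 (size r)]).
- by apply/allP => z /mapP [i _ ->]; apply/rootP.
- by rewrite map_inj_uniq ?iota_uniq // => m k /eqP; rewrite eqr_nat => /eqP.
- by rewrite size_map size_iota.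
Qed.

Lemma meval_horner_mpolyC (n : nat) (K : comNzRingType) (v : 'I_n -> K)
    (r : {poly K}) (j : 'I_n) :
  (map_poly (@mpolyC n K) r).['X_j].@[v] = r.[v j].
Proof.
rewrite -mevalXU -horner_map /= -map_poly_comp map_poly_id // => a _ /=.
exact: mevalC.
Qed.

Lemma mpoly_div_linear (K : comNzRingType) (i j : 'I_2) (c : K) (p : {mpoly K[2]}) :
  i != j -> exists q (r : {poly K}),
    p = q * ('X_i - c *: 'X_j) + (map_poly (@mpolyC 2 K) r).['X_j].
Proof.
move=> ij.
have XE (m : 'X_{1..2}) : 'X_[m] = 'X_i ^+ m i * 'X_j ^+ m j :> {mpoly K[2]}.
  rewrite mpolyX_ord2.
  by case: (ord2P i) ij => ->; case: (ord2P j) => -> //= _; rewrite mulrC.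
pattern p; apply: mpoly_supp_ind => [|p1 p2 [q1 [r1 ->]] [q2 [r2 ->]]|c' m _].
- by exists 0, 0; rewrite mul0r map_poly0 horner0 addr0.
- by exists (q1 + q2), (r1 + r2); rewrite raddfD hornerD mulrDl addrACA.
pose S := \sum_(k < m i) 'X_i ^+ ((m i).-1 - k)%N * (c *: 'X_j) ^+ k.
exists (c' *: (S * 'X_j ^+ m j)), ((c' * c ^+ m i) *: 'X^(m i + m j)).
have HS : 'X_i ^+ m i = ('X_i - c *: 'X_j) * S + (c *: 'X_j) ^+ m i.
  by rewrite -subrXX subrK.
rewrite XE HS map_polyZ map_polyXn hornerZ hornerXn.
rewrite -!mul_mpolyC rmorphM rmorphXn /= exprD exprMn; ring.
Qed.

Lemma poly_upcrossing (K : rcfType) (g : {poly K}) S T : S <= T ->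
  g.[S] < 0 -> 0 < g.[T] -> exists y, g.[y] = 0 /\ 0 <= g^`().[y].
Proof.
move=> ST gS gT; have gST : g.[S] * g.[T] < 0 by rewrite pmulr_llt0.
case: (prev_rootP g S T) => [g0|y _ gy yST noroot|_ _ _ noroot].
- by move: gT; rewrite g0 horner0 ltxx.
- (* y is the last root of g before T, so g has the sign of g.[T] on ]y, T[. *)
  exists y; split => //; move: yST; rewrite in_itv /= => /andP [_ yT].
  have /factor_theorem [h gE] : root g y by apply/rootP.
  have hT : 0 < h.[T].
    by move: gT; rewrite gE hornerM hornerXsubC pmulr_lgt0 // subr_gt0.
  rewrite gE derivM derivXsubC mulr1 hornerD hornerM hornerXsubC subrr mulr0 add0r.
  rewrite leNgt; apply/negP => hy.
  have hyT : h.[y] * h.[T] < 0 by rewrite pmulr_llt0.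
  have [z zyT /rootP hz] := poly_ivtoo (ltW yT) hyT.
  by have := noroot z zyT; rewrite rootE gE hornerM hz mul0r eqxx.
- have [z zST /rootP gz] := poly_ivtoo ST gST.
  by have := noroot z zST; rewrite rootE gz eqxx.
Qed.

Variable R : realType.
Implicit Types (p q f : {mpoly R[2]}) (a b c t x y : R).

Lemma ev2_0 x y : ev2 0 x y = 0. Proof. exact: meval0. Qed.
Lemma ev2C c x y : ev2 c%:MP x y = c. Proof. exact: mevalC. Qed.
Lemma ev2N p x y : ev2 (- p) x y = - ev2 p x y. Proof. exact: mevalN. Qed.
Lemma ev2D p q x y : ev2 (p + q) x y = ev2 p x y + ev2 q x y.
Proof. exact: mevalD. Qed.
Lemma ev2B p q x y : ev2 (p - q) x y = ev2 p x y - ev2 q x y.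
Proof. exact: mevalB. Qed.
Lemma ev2M p q x y : ev2 (p * q) x y = ev2 p x y * ev2 q x y.
Proof. exact: mevalM. Qed.
Lemma ev2Z c p x y : ev2 (c *: p) x y = c * ev2 p x y. Proof. exact: mevalZ. Qed.
Lemma ev2X0 x y : ev2 'X_x0 x y = x. Proof. by rewrite /ev2 mevalXU ffunE eqxx. Qed.
Lemma ev2X1 x y : ev2 'X_x1 x y = y. Proof. by rewrite /ev2 mevalXU ffunE. Qed.
Lemma ev2X m x y : ev2 'X_[m] x y = x ^+ m x0 * y ^+ m x1.
Proof. by rewrite /ev2 mevalX big_ord2 !ffunE. Qed.

Lemma ev2_dhomog d p t x y : p \is d.-homog ->
  ev2 p (t * x) (t * y) = t ^+ d * ev2 p x y.
Proof.
move=> hp; pattern p; apply: mpoly_supp_ind => [|p1 p2 IH1 IH2|c m /(dhomog_ord2P hp) <-].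
- by rewrite !ev2_0 mulr0.
- by rewrite !ev2D IH1 IH2 mulrDr.
by rewrite !ev2Z !ev2X !exprMn exprD; ring.
Qed.

Lemma euler_dhomog d p x y : p \is d.-homog ->
  x * ev2 p^`M(x0) x y + y * ev2 p^`M(x1) x y = d%:R * ev2 p x y.
Proof.
move=> hp; pattern p; apply: mpoly_supp_ind => [|p1 p2 IH1 IH2|c m /(dhomog_ord2P hp) <-].
- by rewrite !mderiv0 !ev2_0 !mulr0 addr0.
- by rewrite !mderivD !ev2D !mulrDr addrACA IH1 IH2.
have xD (k : nat) (z : R) : z * (k%:R * z ^+ (k - 1)) = k%:R * z ^+ k.
  by case: k => [|k]; rewrite ?mul0r ?mulr0 // subn1 /= exprS; ring.
rewrite !mderivZ !mderivX !ev2Z !ev2X !mnmBE !mnm1E eqxx /= !subn0 natrD.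
transitivity (c * (y ^+ m x1 * (x * ((m x0)%:R * x ^+ (m x0 - 1)))) +
              c * (x ^+ m x0 * (y * ((m x1)%:R * y ^+ (m x1 - 1))))); first ring.
by rewrite !xD; ring.
Qed.

Lemma dhomog_mderiv d p i : p \is d.-homog -> p^`M(i) \is d.-1.-homog.
Proof.
move=> hp; pattern p; apply: mpoly_supp_ind => [|p1 p2|c m /(dhomog_ord2P hp) <-].
- by rewrite mderiv0 dhomog0.
- by rewrite mderivD; apply: dhomogD.
rewrite mderivZ mderivX; apply/dhomogZ.
have [->|mi] := eqVneq (m i) 0%N; first by rewrite scale0r dhomog0.
apply/dhomogZ; rewrite dhomogX; apply/eqP.
transitivity (mdeg (m - U_(i))%MM) => //; rewrite mdeg_ord2 !mnmBE !mnm1E.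
by case: (ord2P i) mi => -> mi /=; lia.
Qed.

Lemma mderiv_dhomog0 p i : p \is 0.-homog -> p^`M(i) = 0.
Proof.
move=> hp; pattern p; apply: mpoly_supp_ind => [|p1 p2 IH1 IH2|c m /(dhomog_ord2P hp) hm].
- exact: mderiv0.
- by rewrite mderivD IH1 IH2 addr0.
rewrite mderivZ mderivX; have -> : m i = 0%N by case: (ord2P i) => ->; lia.
by rewrite scale0r scaler0.
Qed.

Lemma hess_dhomog0 f : f \is 0.-homog -> hess f = 0.
Proof.
move=> hf; rewrite /hess !(mderiv_dhomog0 _ hf) !mderiv0.
by rewrite mulr0 expr2 mulr0 subr0.
Qed.

Lemma dhomog_hess n f : f \is n.-homog -> hess f \is (n.-2 + n.-2).-homog.
Proof.
move=> hf; have hf0 := dhomog_mderiv x0 hf; have hf1 := dhomog_mderiv x1 hf.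
rewrite /hess expr2 dhomogD //; first exact/dhomogM/dhomog_mderiv/hf1/dhomog_mderiv/hf0.
by rewrite dhomogN; apply/dhomogM/dhomog_mderiv/hf0/dhomog_mderiv/hf0.
Qed.

Lemma hessN f : hess (- f) = hess f.
Proof. by rewrite /hess !mderivN mulrNN sqrrN. Qed.

Lemma ev2_hess f x y : ev2 (hess f) x y =
  ev2 f^`M(x0)^`M(x0) x y * ev2 f^`M(x1)^`M(x1) x y - ev2 f^`M(x0)^`M(x1) x y ^+ 2.
Proof. by rewrite /hess ev2B ev2M expr2 ev2M expr2. Qed.

Definition subst2 (P0 P1 : {poly R}) p : {poly R} :=
  mmap (@polyC R) (fun i => if i == x0 then P0 else P1) p.

Lemma horner_subst2 P0 P1 p s : (subst2 P0 P1 p).[s] = ev2 p P0.[s] P1.[s].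
Proof.
pattern p; apply: mpoly_supp_ind => [|p1 p2 IH1 IH2|c m _].
- by rewrite /subst2 mmap0 horner0 ev2_0.
- by rewrite /subst2 mmapD hornerD -!/(subst2 _ _ _) IH1 IH2 ev2D.
rewrite /subst2 mmapZ mmapX /mmap1 big_ord2 /= ev2Z ev2X.
by rewrite hornerCM hornerM !horner_exp.
Qed.

Lemma deriv_subst2X1 p : (subst2 'X 1 p)^`() = subst2 'X 1 p^`M(x0).
Proof.
pattern p; apply: mpoly_supp_ind => [|p1 p2 IH1 IH2|c m _].
- by rewrite mderiv0 /subst2 mmap0 deriv0.
- by rewrite mderivD /subst2 !mmapD derivD -!/(subst2 _ _ _) IH1 IH2.
rewrite mderivZ mderivX /subst2 !mmapZ !mmapX /mmap1 !big_ord2 /=.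
rewrite !mnmBE !mnm1E eqxx /= !expr1n !mulr1 subn1 polyC_natr mulr_natl.
by rewrite derivM derivC mul0r add0r derivXn.
Qed.

Lemma mdvd_vanishing_linear (i j : 'I_2) c p : i != j ->
  (forall y, p.@[[ffun k => if k == i then c * y else y]] = 0) ->
  mdvd ('X_i - c *: 'X_j) p.
Proof.
move=> ij p0; have [q [r pE]] := mpoly_div_linear c p ij.
suff r0 : r = 0 by exists q; rewrite pE r0 map_poly0 horner0 addr0.
apply: poly_vanishing_eq0 => y; move: (p0 y).
rewrite pE mevalD mevalM mevalB mevalZ !mevalXU meval_horner_mpolyC !ffunE.
by rewrite eqxx eq_sym (negPf ij) subrr mulr0 add0r.
Qed.

Lemma linear_factor_of_vanishing_line p a b : (a, b) != (0, 0) ->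
  (forall t, ev2 p (t * a) (t * b) = 0) -> has_real_linear_factor p.
Proof.
move=> nz p0; have [b0|b0] := eqVneq b 0.
  have a0 : a != 0 by move: nz; rewrite b0 xpair_eqE eqxx andbT.
  have [|q ->] := @mdvd_vanishing_linear x1 x0 0 p isT.
    move=> y; rewrite -[RHS](p0 (y / a)) b0 mulr0 divfK //.
    by apply: meval_eq => k; rewrite !ffunE mul0r; case: (ord2P k) => ->.
  exists 0, 1; split; first by rewrite xpair_eqE eqxx oner_eq0.
  by exists q; rewrite /linform scale0r add0r scale1r subr0.
have [|q ->] := @mdvd_vanishing_linear x0 x1 (a / b) p isT.
  move=> y; rewrite -[RHS](p0 (y / b)) divfK //.
  by rewrite /ev2 [y / b * a]mulrC mulrA mulrAC.
exists 1, (- (a / b)); split; first by rewrite xpair_eqE oner_eq0.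
by exists q; rewrite /linform scale1r scaleNr.
Qed.

Lemma linear_factor_of_dhomog_root d p x y : p \is d.-homog -> (x, y) != (0, 0) ->
  ev2 p x y = 0 -> has_real_linear_factor p.
Proof.
move=> hp nz p0; apply: (linear_factor_of_vanishing_line nz) => t.
by rewrite (ev2_dhomog _ _ _ hp) p0 mulr0.
Qed.

Lemma linear_factor_of_vanishing_kernel p a b : (a, b) != (0, 0) ->
  (forall t, ev2 p (t * - b) (t * a) = 0) -> has_real_linear_factor p.
Proof.
move=> nz; apply: linear_factor_of_vanishing_line.
by move: nz; rewrite !xpair_eqE oppr_eq0 andbC.
Qed.

Lemma mderiv_linform0 a b : (linform a b)^`M(x0) = a%:MP.
Proof. by rewrite mderivD !mderivZ !mderivXU /= scaler0 addr0 -mul_mpolyC mulr1. Qed.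

Lemma mderiv_linform1 a b : (linform a b)^`M(x1) = b%:MP.
Proof. by rewrite mderivD !mderivZ !mderivXU /= scaler0 add0r -mul_mpolyC mulr1. Qed.

Lemma hess_mul_linform q a b x y : a * x + b * y = 0 ->
  ev2 (hess (q * linform a b)) x y =
  - (a * ev2 q^`M(x1) x y - b * ev2 q^`M(x0) x y) ^+ 2.
Proof.
move=> Lxy; rewrite ev2_hess.
rewrite !(mderivM, mderivD, mderiv_linform0, mderiv_linform1, mderivC).
by rewrite !(ev2D, ev2M, ev2C, ev2Z, ev2X0, ev2X1) Lxy; ring.
Qed.

Lemma hess_mul_linform_sqr q a b x y : a * x + b * y = 0 ->
  ev2 (hess (q * linform a b ^+ 2)) x y = 0.
Proof.
move=> Lxy; rewrite expr2 ev2_hess.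
rewrite !(mderivM, mderivD, mderiv_linform0, mderiv_linform1, mderivC).
by rewrite !(ev2D, ev2M, ev2C, ev2Z, ev2X0, ev2X1) Lxy; ring.
Qed.

Lemma elliptic_no_linear_factor f : elliptic f -> ~ has_real_linear_factor f.
Proof.
move=> [_ [noLH Hge0]] [a [b [nz [q fE]]]]; subst f; apply: noLH.
apply: (linear_factor_of_vanishing_kernel nz) => t; apply/eqP.
rewrite eq_le Hge0 andbT hess_mul_linform ?oppr_le0 ?sqr_ge0 //; ring.
Qed.

Lemma hyperbolic_linear_factor_simple f a b : hyperbolic f ->
  is_real_linear_factor a b f -> ~ mdvd (linform a b ^+ 2) f.
Proof.
move=> [_ [noLH _]] [nz _] [q fE]; subst f; apply: noLH.
apply: (linear_factor_of_vanishing_kernel nz) => t.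
by rewrite hess_mul_linform_sqr //; ring.
Qed.

Lemma dhomog_pos_off_axis k p a : p \is k.-homog -> 0 < ev2 p a 0 ->
  exists2 M, 0 < M & 0 < ev2 p (a * M) 1.
Proof.
move=> hp pa0; pose r := subst2 a%:P 'X p.
have rE s : r.[s] = ev2 p a s by rewrite horner_subst2 hornerC hornerX.
have [d d0 rcont] := poly_cont 0 r pa0.
pose s : R := d / 2; have s0 : 0 < s by rewrite divr_gt0.
have : `|r.[s] - r.[0]| < ev2 p a 0 by apply: rcont; rewrite subr0 gtr0_norm // /s; lra.
rewrite !rE ltr_norml => /andP [pas _].
exists s^-1; first by rewrite invr_gt0.
have -> : ev2 p (a * s^-1) 1 = ev2 p (s^-1 * a) (s^-1 * s).
  by rewrite mulrC mulVf ?gt_eqF.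
rewrite (ev2_dhomog _ _ _ hp).
by rewrite mulr_gt0 ?exprn_gt0 ?invr_gt0 //; lra.
Qed.

Lemma dhomog_neg_off_axis k p a : p \is k.-homog -> ev2 p a 0 < 0 ->
  exists2 M, 0 < M & ev2 p (a * M) 1 < 0.
Proof.
rewrite -dhomogN -oppr_gt0 -ev2N => /dhomog_pos_off_axis hp /hp [M M0].
by rewrite ev2N oppr_gt0; exists M.
Qed.

Definition nonvanishing f := forall x y, (x, y) != (0, 0) -> ev2 f x y != 0.

Lemma nonvanishing_pos_affine f : nonvanishing f -> 0 < ev2 f 0 1 ->
  forall t, 0 < ev2 f t 1.
Proof.
move=> fnz f01 t; pose g := subst2 'X 1 f.
have gE s : g.[s] = ev2 f s 1 by rewrite horner_subst2 hornerX hornerC.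
have nz1 s : ev2 f s 1 != 0 by apply: fnz; rewrite xpair_eqE oner_eq0 andbF.
rewrite ltNge; apply/negP => ft.
have [t0|t0] := lerP 0 t.
  have g0t : g.[0] * g.[t] <= 0 by rewrite !gE mulr_ge0_le0 // ltW.
  by have [s _ /rootP] := polyrcf.poly_ivt t0 g0t; rewrite gE; apply/eqP/nz1.
have gt0 : g.[t] * g.[0] <= 0 by rewrite !gE mulr_le0_ge0 // ltW.
by have [s _ /rootP] := polyrcf.poly_ivt (ltW t0) gt0; rewrite gE; apply/eqP/nz1.
Qed.

Lemma nonvanishing_pos_axis n f : f \is n.-homog -> nonvanishing f ->
  0 < ev2 f 0 1 -> forall a, a != 0 -> 0 < ev2 f a 0.
Proof.
move=> hf fnz f01 a a0; have := fnz a 0; rewrite xpair_eqE (negPf a0) => /(_ isT) fa0.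
rewrite lt_neqAle eq_sym fa0 leNgt; apply/negP => /(dhomog_neg_off_axis hf) [M _].
by rewrite ltNge (ltW (nonvanishing_pos_affine fnz f01 _)).
Qed.

Lemma hess_dehomog_critical n f y : f \is n.-homog -> ev2 f^`M(x0) y 1 = 0 ->
  ev2 (hess f) y 1 = n.-1%:R * n%:R * ev2 f y 1 * ev2 f^`M(x0)^`M(x0) y 1.
Proof.
move=> hf fx0.
have E := euler_dhomog y 1 hf.
have E0 := euler_dhomog y 1 (dhomog_mderiv x0 hf).
have E1 := euler_dhomog y 1 (dhomog_mderiv x1 hf).
rewrite fx0 mulr0 add0r mul1r in E; rewrite fx0 mulr0 mul1r in E0.
rewrite mderiv_comm mul1r E in E1.
have fyy : ev2 f^`M(x1)^`M(x1) y 1 =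
    n.-1%:R * (n%:R * ev2 f y 1) - y * ev2 f^`M(x0)^`M(x1) y 1.
  by rewrite -E1; ring.
have fxy : ev2 f^`M(x0)^`M(x1) y 1 = - (y * ev2 f^`M(x0)^`M(x0) y 1).
  by apply/eqP; rewrite -addr_eq0 addrC E0.
by rewrite ev2_hess fyy fxy; ring.
Qed.

Lemma positive_dhomog_hess_nonneg n f : f \is n.-homog -> (0 < n)%N ->
  (forall t, 0 < ev2 f t 1) -> (forall a, a != 0 -> 0 < ev2 f a 0) ->
  exists y, 0 <= ev2 (hess f) y 1.
Proof.
move=> hf n0 f_aff f_axis; have hfx := dhomog_mderiv x0 hf.
have n0R : 0 < n%:R :> R by rewrite ltr0n.
have fx_pos : 0 < ev2 f^`M(x0) 1 0.
  have := euler_dhomog 1 0 hf; rewrite mul0r addr0 mul1r => ->.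
  by rewrite mulr_gt0 // f_axis ?oner_eq0.
have fx_neg : ev2 f^`M(x0) (-1) 0 < 0.
  have := euler_dhomog (-1) 0 hf; rewrite mul0r addr0 mulN1r => /eqP.
  rewrite eqr_oppLR => /eqP ->.
  by rewrite oppr_lt0 mulr_gt0 // f_axis // oppr_eq0 oner_eq0.
have [T T0 gT] := dhomog_pos_off_axis hfx fx_pos.
have [M M0 gM] := dhomog_neg_off_axis hfx fx_neg.
pose g := subst2 'X 1 f^`M(x0).
have gE s : g.[s] = ev2 f^`M(x0) s 1 by rewrite horner_subst2 hornerX hornerC.
have [|||y [gy g'y]] := @poly_upcrossing _ g (-1 * M) (1 * T); rewrite ?gE //.
  lra.
exists y; rewrite (hess_dehomog_critical hf) -?gE //.
rewrite deriv_subst2X1 horner_subst2 hornerX hornerC in g'y.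
by rewrite !mulr_ge0 ?ler0n // ltW.
Qed.

Lemma nonvanishing_dhomog_hess_nonneg n f : f \is n.-homog -> (0 < n)%N ->
  nonvanishing f -> exists y, 0 <= ev2 (hess f) y 1.
Proof.
wlog f01 : f / 0 < ev2 f 0 1 => [hwlog hf n0 fnz|hf n0 fnz].
  have f01 : ev2 f 0 1 != 0 by apply: fnz; rewrite xpair_eqE oner_eq0 andbF.
  have [f01p|f01n] := ltP 0 (ev2 f 0 1); first exact: hwlog.
  rewrite -hessN; apply: hwlog; rewrite ?dhomogN //.
  - by rewrite ev2N oppr_gt0 lt_neqAle f01 f01n.
  - by move=> x y nz; rewrite ev2N oppr_eq0; apply: fnz.
apply: (positive_dhomog_hess_nonneg hf n0); first exact: nonvanishing_pos_affine.
exact: nonvanishing_pos_axis hf fnz f01.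
Qed.

Lemma nonvanishing_of_no_linear_factor d f : f \is d.-homog ->
  ~ has_real_linear_factor f -> nonvanishing f.
Proof.
move=> hf noLf x y nz; apply/eqP => f0.
exact: noLf (linear_factor_of_dhomog_root hf nz f0).
Qed.

Lemma hyperbolic_has_linear_factor f : hyperbolic f -> has_real_linear_factor f.
Proof.
move=> [[n hf] [noLH Hle0]]; apply: NNPP => noLf; apply: noLH.
have [n0|n_gt0] := posnP n.
  rewrite n0 in hf; rewrite hess_dhomog0 //; exists 1, 0.
  by split; [rewrite xpair_eqE oner_eq0 | exists 0; rewrite mul0r].
have fnz := nonvanishing_of_no_linear_factor hf noLf.
have [y Hge0] := nonvanishing_dhomog_hess_nonneg hf n_gt0 fnz.
have y1 : (y, 1) != (0, 0) :> R * R by rewrite xpair_eqE oner_eq0 andbF.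
apply: (linear_factor_of_dhomog_root (dhomog_hess hf) y1).
by apply/eqP; rewrite eq_le Hle0.
Qed.

End HessianLinearFactors.

Theorem lemma1 (R : realType) :
  (forall f : {mpoly R[2]}, hyperbolic f ->
     has_real_linear_factor f /\
     (forall a b : R, is_real_linear_factor a b f ->
        ~ mdvd (linform a b ^+ 2) f)) /\
  (forall f : {mpoly R[2]}, elliptic f -> ~ has_real_linear_factor f).
Proof.
split; last exact: elliptic_no_linear_factor.
move=> f hf; split; first exact: hyperbolic_has_linear_factor.
by move=> a b; apply: hyperbolic_linear_factor_simple.
Qed.
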